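(* Fix $\alpha>0$. For each $N\ge 2$, let $T_1,\ldots,T_N$ be drawn independently and uniformly at random from $\{n\in\mathbb{N}: n\le e^{\alpha N}\}$, and let $\Gamma_{j,k}=\gcd(T_j,T_k)$. Let $\mathcal{P}$ denote the set of rational primes. Then for every $s\in(0,1)$ the product \[ C_s:=\prod_{p\in\mathcal{P}}\left(1+\frac{p^s-1}{p^2-p^s}\right) \] is finite, and for every $b>0$ and every $N\ge 2$, \[ \mathbb{P}\Big[\max_{1\le j<k\le N}\Gamma_{j,k}\ge N^{2/s}b^{1/s}\Big]\le \frac{C_s}{2b}. \] *)

From mathcomp Require Import all_boot.
From Stdlib Require Import Reals.
Set Implicit Arguments. Unset Strict Implicit. Unset Printing Implicit Defensive.

Definition Mrange (alpha : R) (N : nat) : nat :=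
  Z.to_nat (Int_part (exp (alpha * INR N))).

(* A sample (T_1,...,T_N) is f : {ffun 'I_N -> 'I_M}, with T_j = f j + 1,
   so T_j ranges uniformly over {1,...,M}. *)
Definition Tval (N M : nat) (f : {ffun 'I_N -> 'I_M}) (j : 'I_N) : nat :=
  (nat_of_ord (f j)).+1.

Definition maxgcd (N M : nat) (f : {ffun 'I_N -> 'I_M}) : nat :=
  \max_(j < N) \max_(k < N | (j < k)%N) gcdn (Tval f j) (Tval f k).

Definition Rgeb (x y : R) : bool := if Rle_dec y x then true else false.

Definition prob_maxgcd_ge (N M : nat) (thr : R) : R :=
  INR #|[set f : {ffun 'I_N -> 'I_M} | Rgeb (INR (maxgcd f)) thr]|
  / INR #|{ffun 'I_N -> 'I_M}|.

Definition Cfactor (s : R) (p : nat) : R :=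
  (1 + (Rpower (INR p) s - 1) / (INR p ^ 2 - Rpower (INR p) s))%R.

Definition Cpartial (s : R) (n : nat) : R :=
  \big[Rmult/1%R]_(p < n | prime p) Cfactor s p.

(* With t^s = N^2 b, Markov's inequality for sum_(j < k) gcd(T_j, T_k)^s and the
   uniformity of each pair (T_j, T_k) reduce the bound to
   sum_(a, b <= M) gcd(a, b)^s <= M^2 C_s.  Write n^s = sum_(d | n) g(d) with g
   multiplicative, g(p^k) = p^(ks) - p^((k-1)s); then the left side is
   sum_d g(d) floor(M/d)^2 <= M^2 prod_p sum_k g(p^k) / p^(2k) = M^2 C_s.  The Euler
   product is reached by induction over the primes, keeping only the part of the gcd
   supported on primes < m.  Finally log C_s <= 2 sum_n n^(s-2), which is finite by
   dyadic condensation since s - 2 < -1. *)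

From HB Require Import structures.
From mathcomp Require Import all_boot.
From Stdlib Require Import Reals Lra Lia.
Set Implicit Arguments. Unset Strict Implicit. Unset Printing Implicit Defensive.
Local Open Scope R_scope.

Lemma RplusA : associative Rplus. Proof. by move=> x y z; rewrite Rplus_assoc. Qed.
Lemma RmultA : associative Rmult. Proof. by move=> x y z; rewrite Rmult_assoc. Qed.

HB.instance Definition _ := Monoid.isComLaw.Build R 0 Rplus RplusA Rplus_comm Rplus_0_l.
HB.instance Definition _ := Monoid.isComLaw.Build R 1 Rmult RmultA Rmult_comm Rmult_1_l.
HB.instance Definition _ := Monoid.isMulLaw.Build R 0 Rmult Rmult_0_l Rmult_0_r.
HB.instance Definition _ :=
  Monoid.isAddLaw.Build R Rmult Rplus Rmult_plus_distr_r Rmult_plus_distr_l.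

Lemma Rsum_le (I : Type) (r : seq I) (P : pred I) (F G : I -> R) :
  (forall i, P i -> F i <= G i) ->
  \big[Rplus/0]_(i <- r | P i) F i <= \big[Rplus/0]_(i <- r | P i) G i.
Proof. by move=> FG; apply: (big_ind2 (fun x y => x <= y)) => // *; lra. Qed.

Lemma Rsum_ge0 (I : Type) (r : seq I) (P : pred I) (F : I -> R) :
  (forall i, P i -> 0 <= F i) -> 0 <= \big[Rplus/0]_(i <- r | P i) F i.
Proof. by move=> F0; apply: (big_ind (fun x => 0 <= x)) => // *; lra. Qed.

Lemma Rsum_cond_le (I : Type) (r : seq I) (P : pred I) (F : I -> R) :
  (forall i, 0 <= F i) ->
  \big[Rplus/0]_(i <- r | P i) F i <= \big[Rplus/0]_(i <- r) F i.
Proof.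
move=> F0; rewrite big_mkcond; apply: Rsum_le => i _.
by case: (P i) => //; have := F0 i; lra.
Qed.

Lemma Rsum_ge_term (T : finType) (F : T -> R) (i : T) :
  (forall j, 0 <= F j) -> F i <= \big[Rplus/0]_(j : T) F j.
Proof.
move=> F0; rewrite (bigD1 i) //=.
suff : 0 <= \big[Rplus/0]_(j | j != i) F j by lra.
exact: Rsum_ge0.
Qed.

Lemma Rsum_pick (T : finType) (x : T) (F : T -> R) :
  \big[Rplus/0]_(a : T) (if x == a then F a else 0) = F x.
Proof. by rewrite -big_mkcond (eq_bigl _ _ (fun a => eq_sym x a)) big_pred1_eq. Qed.

Lemma iter_Rplus n c : iter n (Rplus c) 0 = INR n * c.
Proof. by elim: n => [|n IH]; rewrite ?iterS ?IH ?S_INR /=; ring. Qed.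

Lemma INR_sum (I : Type) (r : seq I) (P : pred I) (F : I -> nat) :
  INR (\sum_(i <- r | P i) F i) = \big[Rplus/0]_(i <- r | P i) INR (F i).
Proof. exact: (big_morph INR plus_INR). Qed.

Lemma Rsum_card (T : finType) (A : {pred T}) (c : R) :
  \big[Rplus/0]_(x : T) (if x \in A then c else 0) = INR #|A| * c.
Proof.
rewrite -big_mkcond -sum1_card INR_sum big_distrl /=.
by apply: eq_bigr => i _; rewrite Rmult_1_l.
Qed.

Lemma INR_expn m n : INR (expn m n) = INR m ^ n.
Proof. by elim: n => [|n IH]; rewrite ?expn0 // expnS mult_INR IH. Qed.

Lemma INR_gt0 n : (0 < n)%nat -> 0 < INR n.
Proof. by move=> /ltP; apply: lt_0_INR. Qed.

Lemma Rdiv_le_cross a b c d : 0 < b -> 0 < d -> a * d <= c * b -> a / b <= c / d.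
Proof.
move=> b0 d0 le_ad_cb.
have -> : a / b = a * d * / (b * d) by field; lra.
have -> : c / d = c * b * / (b * d) by field; lra.
by apply: Rmult_le_compat_r => //; apply/Rlt_le/Rinv_0_lt_compat/Rmult_lt_0_compat.
Qed.

Lemma Rpower_gt0 x y : 0 < Rpower x y.
Proof. exact: exp_pos. Qed.

Lemma Rpower_pow_l x y j : 0 < x -> Rpower (x ^ j) y = Rpower x y ^ j.
Proof.
move=> x0; elim: j => [|j IH] /=; first by rewrite /Rpower ln_1 Rmult_0_r exp_0.
by rewrite -Rpower_mult_distr ?IH //; apply: pow_lt.
Qed.

Lemma exp_le x y : x <= y -> exp x <= exp y.
Proof. by case=> [/exp_increasing/Rlt_le | ->] //; apply: Rle_refl. Qed.

Lemma Rpower_decreasing x y e : e < 0 -> 0 < x -> x <= y -> Rpower y e <= Rpower x e.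
Proof.
move=> e0 x0 xy; rewrite -(Ropp_involutive e) !(Rpower_Ropp _ (- e)).
apply: Rinv_le_contravar; first exact: Rpower_gt0.
apply: Rle_Rpower_l; lra.
Qed.

Lemma geometric_sum_le q K : 0 <= q < 1 -> \big[Rplus/0]_(k < K) q ^ k <= / (1 - q).
Proof.
move=> q01.
have closed_form n : \big[Rplus/0]_(k < n) q ^ k + q ^ n / (1 - q) = / (1 - q).
  elim: n => [|n IH]; first by rewrite big_ord0 /=; field; lra.
  by rewrite big_ord_recr /= -IH /=; field; lra.
rewrite -(closed_form K); suff : 0 <= q ^ K / (1 - q) by lra.
apply: Rmult_le_pos; [apply: pow_le | apply/Rlt_le/Rinv_0_lt_compat]; lra.
Qed.

Definition euler_weight (s : R) (p k : nat) : R :=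
  if k is k'.+1 then Rpower (INR p) s ^ k'.+1 - Rpower (INR p) s ^ k' else 1.

Section EulerFactor.
Variables (s : R) (p : nat).
Hypotheses (s01 : 0 < s < 1) (p_gt1 : (1 < p)%nat).

Local Notation ps := (Rpower (INR p) s).

Lemma INR_gt1 : 1 < INR p.
Proof. exact: (lt_INR 1 p (ltP p_gt1)). Qed.

Lemma Rpower_INR_gt1 : 1 < ps.
Proof. rewrite -(Rpower_O (INR p)); [apply: Rpower_lt|]; have := INR_gt1; lra. Qed.

Lemma Rpower_INR_lt : ps < INR p.
Proof.
rewrite -{2}(Rpower_1 (INR p)); [apply: Rpower_lt|]; have := INR_gt1; lra.
Qed.

Lemma euler_weight_ge0 k : 0 <= euler_weight s p k.
Proof.
case: k => [|k] /=; first lra.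
have := Rpower_INR_gt1; have : 1 <= ps ^ k by apply: pow_R1_Rle; have := Rpower_INR_gt1; lra.
nra.
Qed.

Lemma sum_euler_weight j : \big[Rplus/0]_(k < j.+1) euler_weight s p k = ps ^ j.
Proof.
elim: j => [|j IH]; rewrite big_ord_recr /=; first by rewrite big_ord0 /=; lra.
by rewrite IH; lra.
Qed.

Lemma sum_euler_weight_le_Cfactor K :
  \big[Rplus/0]_(k < K) (euler_weight s p k / (INR p ^ 2) ^ k) <= Cfactor s p.
Proof.
have ps1 := Rpower_INR_gt1; have psp := Rpower_INR_lt; have p1 := INR_gt1.
set q := INR p ^ 2.
have psq : ps < q by rewrite /q /=; nra.
set x := ps / q.
have x0 : 0 < x by apply: Rdiv_lt_0_compat; lra.
have x1 : x < 1 by apply: (Rmult_lt_reg_r q); rewrite /x /Rdiv ?Rmult_assoc ?Rinv_l; lra.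
have qn n : q ^ n <> 0 by apply: pow_nonzero; lra.
have xn n : x ^ n = ps ^ n / q ^ n.
  by elim: n => [|n IH] /=; [field | rewrite IH /x; field; split; [exact: qn | lra]].
(* [Cfactor s p] is the full series sum_k euler_weight s p k / q^k; its tail is geometric. *)
have closed_form n : \big[Rplus/0]_(k < n.+1) (euler_weight s p k / q ^ k)
    + (1 - / ps) * x ^ n.+1 / (1 - x) = Cfactor s p.
  elim: n => [|n IH].
    rewrite big_ord_recr big_ord0 /Cfactor /x /q /=.
    have psp2 : ps < INR p * (INR p * 1) by nra.
    by field; repeat split; lra.
  rewrite big_ord_recr /= -IH.
  have -> : euler_weight s p n.+1 / q ^ n.+1 = (1 - / ps) * x ^ n.+1.
    by rewrite xn /=; field; split; [exact: qn | lra].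
  by rewrite /=; field; lra.
rewrite -(closed_form K) big_ord_recr /=.
suff : 0 <= euler_weight s p K / q ^ K /\ 0 <= (1 - / ps) * (x * x ^ K) / (1 - x) by lra.
split.
  by apply: Rmult_le_pos; [exact: euler_weight_ge0 | apply/Rlt_le/Rinv_0_lt_compat/pow_lt; lra].
have := Rinv_1_lt_contravar 1 ps (Rle_refl 1) ps1; rewrite Rinv_1 => ips.
apply: Rmult_le_pos; last (apply/Rlt_le/Rinv_0_lt_compat; lra).
apply: Rmult_le_pos; first lra.
by apply: Rmult_le_pos; [lra | apply: pow_le; lra].
Qed.

Lemma Cfactor_ge1 : 1 <= Cfactor s p.
Proof.
have := Rpower_INR_gt1; have := Rpower_INR_lt; have := INR_gt1 => p1 psp ps1.
have den : 0 < INR p ^ 2 - ps by rewrite /=; nra.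
suff : 0 <= (ps - 1) / (INR p ^ 2 - ps) by rewrite /Cfactor; lra.
by apply: Rmult_le_pos; [lra | apply/Rlt_le/Rinv_0_lt_compat].
Qed.

Lemma Cfactor_le_exp : Cfactor s p <= exp (2 * Rpower (INR p) (s - 2)).
Proof.
have := Rpower_INR_gt1; have := Rpower_INR_lt; have := INR_gt1 => p1 psp ps1.
have -> : Rpower (INR p) (s - 2) = ps / INR p ^ 2.
  rewrite (_ : s - 2 = s + - INR 2); last by rewrite /=; ring.
  by rewrite Rpower_plus Rpower_Ropp Rpower_pow; lra.
apply: Rle_trans (exp_ineq1_le _); apply: Rplus_le_compat_l.
have den : 0 < INR p ^ 2 - ps by rewrite /=; nra.
have p2 : 2 <= INR p by have := le_INR 2 p (leP p_gt1).
by rewrite Rmult_div_assoc; apply: Rdiv_le_cross => /=; nra.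
Qed.
End EulerFactor.

Section Convergence.
Variable s : R.
Hypothesis s01 : 0 < s < 1.

Local Notation u d := (Rpower (INR d) (s - 2)).
Local Notation q := (Rpower 2 (s - 1)).

Lemma Rpower_2_bounds : 0 <= q < 1.
Proof.
split; first exact/Rlt_le/Rpower_gt0.
by rewrite -[X in _ < X](Rpower_O 2); [apply: Rpower_lt | ]; lra.
Qed.

Lemma sum_Rpower_mono m n : (m <= n)%nat ->
  \big[Rplus/0]_(1 <= d < m) u d <= \big[Rplus/0]_(1 <= d < n) u d.
Proof.
move=> mn; rewrite (big_nat_widen _ _ _ _ _ mn).
by apply: Rsum_cond_le => d; apply/Rlt_le/Rpower_gt0.
Qed.

(* The dyadic block (2^K, 2^(K+1)] has 2^K terms, each at most (2^K)^(s-2). *)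
Lemma sum_Rpower_dyadic_block K :
  \big[Rplus/0]_((expn 2 K).+1 <= d < (expn 2 K.+1).+1) u d <= q ^ K.
Proof.
have pos2K : 0 < INR (expn 2 K) by apply: INR_gt0; rewrite expn_gt0.
apply: (@Rle_trans _ (\big[Rplus/0]_((expn 2 K).+1 <= d < (expn 2 K.+1).+1)
                         Rpower (INR (expn 2 K)) (s - 2))).
  rewrite big_nat_cond [in X in _ <= X]big_nat_cond.
  apply: Rsum_le => d /andP[/andP[lt_d _] _].
  by apply: Rpower_decreasing => //; [lra | apply/le_INR/leP/ltnW].
rewrite big_const_nat iter_Rplus subSS expnS mul2n -addnn addnK INR_expn.
rewrite (_ : INR 2 = 2) /=; last by ring.
rewrite Rpower_pow_l; last lra.
have -> : s - 1 = 1 + (s - 2) by ring.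
by rewrite Rpower_plus Rpower_1 ?Rpow_mult_distr; lra.
Qed.

Lemma sum_Rpower_dyadic K :
  \big[Rplus/0]_(1 <= d < (expn 2 K).+1) u d <= 1 + \big[Rplus/0]_(k < K) q ^ k.
Proof.
elim: K => [|K IH].
  by rewrite expn0 big_nat1 big_ord0 /= /Rpower ln_1 Rmult_0_r exp_0; lra.
rewrite big_ord_recr (@big_cat_nat _ _ _ (expn 2 K).+1) //=; last by rewrite ltnS leq_exp2l.
by rewrite -Rplus_assoc; apply: Rplus_le_compat; last exact: sum_Rpower_dyadic_block.
Qed.

Lemma sum_Rpower_le n : \big[Rplus/0]_(1 <= d < n) u d <= 1 + / (1 - q).
Proof.
apply: (Rle_trans _ _ _ (sum_Rpower_mono (_ : (n <= (expn 2 n).+1)%nat))).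
  exact: leq_trans (ltnW (ltn_expl n (isT : (1 < 2)%nat))) (leqnSn _).
have := sum_Rpower_dyadic n; have := geometric_sum_le n Rpower_2_bounds; lra.
Qed.

Lemma Cpartial_S m :
  Cpartial s m.+1 = Cpartial s m * (if prime m then Cfactor s m else 1).
Proof. by rewrite /Cpartial big_mkcond big_ord_recr /= -big_mkcond. Qed.

Lemma Cpartial_ge1 n : 1 <= Cpartial s n.
Proof.
apply: (big_ind (fun x => 1 <= x)) => [|x y *|p /prime_gt1 p_gt1]; [lra | nra |].
exact: Cfactor_ge1.
Qed.

Lemma Cpartial_growing : Un_growing (Cpartial s).
Proof.
move=> n; rewrite Cpartial_S; have := Cpartial_ge1 n.
by case: (boolP (prime n)) => [/prime_gt1 /(Cfactor_ge1 s01)|_]; nra.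
Qed.

Lemma Cpartial_le n : Cpartial s n <= exp (2 * (1 + / (1 - q))).
Proof.
have sum_primes : \big[Rplus/0]_(p < n | prime p) u p <= 1 + / (1 - q).
  rewrite -(big_mkord (fun p => prime p) (fun p => u p)).
  rewrite (big_nat_widen _ _ _ _ _ (leqnSn n)) big_ltn_cond //=.
  apply: Rle_trans (sum_Rpower_le n.+1).
  by apply: Rsum_cond_le => d; apply/Rlt_le/Rpower_gt0.
apply: (@Rle_trans _ (\big[Rmult/1]_(p < n | prime p) exp (2 * u p))).
  apply: (proj2 (big_ind2 (fun x y => 0 <= x <= y) _ _ _)) => [|x1 x2 y1 y2 [? ?] [? ?]|p pr_p].
  - lra.
  - by split; [nra | apply: Rmult_le_compat].
  - have := Cfactor_ge1 s01 (prime_gt1 pr_p); have := Cfactor_le_exp s01 (prime_gt1 pr_p); lra.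
rewrite -(big_morph exp exp_plus exp_0) -big_distrr; apply: exp_le.
by apply: Rmult_le_compat_l; [lra | exact: sum_primes].
Qed.

Lemma Cpartial_cv : {Cs | Un_cv (Cpartial s) Cs}.
Proof.
apply: growing_cv; first exact: Cpartial_growing.
by exists (exp (2 * (1 + / (1 - q)))) => _ [n ->]; apply: Cpartial_le.
Qed.
End Convergence.

Definition smooth_part (m n : nat) : nat := n`_[pred q | (q < m)%nat].

Lemma smooth_part0 n : smooth_part 0 n = 1%nat.
Proof. by rewrite /smooth_part /partn big_pred0. Qed.

Lemma smooth_partS_nonprime m n : ~~ prime m -> smooth_part m.+1 n = smooth_part m n.
Proof.
move=> npr_m; apply: eq_in_partn => q; rewrite mem_primes => /andP[pr_q _].
by rewrite !inE ltnS leq_eqVlt; case: eqP => // eq_qm; rewrite -eq_qm pr_q in npr_m.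
Qed.

Lemma smooth_partS_prime p n : prime p -> (0 < n)%nat ->
  smooth_part p.+1 n = (smooth_part p n * expn p (logn p n))%nat.
Proof.
move=> pr_p n_gt0; rewrite /smooth_part.
rewrite -(partnC [pred q | (q < p)%nat] (part_gt0 [pred q | (q < p.+1)%nat] n)).
rewrite partn_part; last by move=> q; rewrite !inE => /ltnW.
congr (_ * _)%nat; rewrite -partnI (@eq_partn _ p) ?p_part //.
by move=> q; rewrite !inE ltnS -leqNgt -eqn_leq.
Qed.

Lemma smooth_part_pfactorM p k n : prime p -> (0 < n)%nat ->
  smooth_part p (expn p k * n) = smooth_part p n.
Proof.
move=> pr_p n_gt0; rewrite /smooth_part partnM //; last by rewrite expn_gt0 prime_gt0.
rewrite partnX part_p'nat ?exp1n ?mul1n //.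
by rewrite pnatE // !inE ltnn.
Qed.

Lemma smooth_part_id m n : (0 < n)%nat -> (n < m)%nat -> smooth_part m n = n.
Proof.
move=> n_gt0 lt_nm; apply: part_pnat_id; apply/pnatP => // q _ dvd_qn.
by rewrite inE; apply: leq_ltn_trans lt_nm; apply: dvdn_leq.
Qed.

Lemma sum_dvd_reindex (d M : nat) (F : nat -> R) : (0 < d)%nat ->
  \big[Rplus/0]_(a < M) (if d %| a.+1 then F a.+1 else 0)
  = \big[Rplus/0]_(a < M %/ d) F (d * a.+1)%nat.
Proof.
move=> d_gt0; elim: M => [|M IH]; first by rewrite div0n !big_ord0.
rewrite big_ord_recr /= IH divnS //; case: ifP => [dvd_d|_] /=; last by rewrite Rplus_0_r.
rewrite add1n big_ord_recr /=; congr (_ + F _).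
by rewrite -[LHS](divnK dvd_d) divnS // dvd_d add1n mulnC.
Qed.

Lemma INR_divn_sqr_le M d : (0 < d)%nat -> INR (M %/ d) ^ 2 <= INR M ^ 2 / INR d ^ 2.
Proof.
move=> d_gt0; have d0 := INR_gt0 d_gt0.
have le_div : INR (M %/ d) <= INR M / INR d.
  apply: (Rmult_le_reg_r (INR d)) => //; rewrite /Rdiv Rmult_assoc Rinv_l; last lra.
  by rewrite Rmult_1_r -mult_INR; apply: le_INR; apply/leP; apply: leq_divM.
have -> : INR M ^ 2 / INR d ^ 2 = (INR M / INR d) ^ 2 by field; lra.
by apply: pow_incr; split => //; apply: pos_INR.
Qed.

Definition gcd_smooth_sum (s : R) (m M : nat) : R :=
  \big[Rplus/0]_(a < M) \big[Rplus/0]_(b < M)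
     Rpower (INR (smooth_part m (gcdn a.+1 b.+1))) s.

Section GcdSum.
Variable s : R.
Hypothesis s01 : 0 < s < 1.

Lemma Rpower_logn_gcd_sum p M a b : prime p -> (a < M)%nat -> (b < M)%nat ->
  Rpower (INR p) s ^ logn p (gcdn a.+1 b.+1) = \big[Rplus/0]_(k < M)
    (if (expn p k %| a.+1) && (expn p k %| b.+1) then euler_weight s p k else 0).
Proof.
move=> pr_p lt_aM lt_bM; rewrite logn_gcd //.
set j := minn _ _.
have lt_jM : (j < M)%nat.
  apply: leq_ltn_trans (geq_minl _ _) (leq_trans _ lt_aM).
  apply: leq_trans (ltn_expl _ (prime_gt1 pr_p)) _.
  by apply: dvdn_leq => //; apply: pfactor_dvdnn.
rewrite -(sum_euler_weight s p j) (big_ord_widen _ _ lt_jM) big_mkcond.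
by apply: eq_bigr => k _; rewrite !pfactor_dvdn // ltnS leq_min.
Qed.

Local Notation gs m x y := (Rpower (INR (smooth_part m (gcdn x y))) s).

Lemma Rpower_smooth_gcdS_prime p x y : prime p -> (0 < x)%nat -> (0 < y)%nat ->
  gs p.+1 x y = gs p x y * Rpower (INR p) s ^ logn p (gcdn x y).
Proof.
move=> pr_p x_gt0 y_gt0; have g_gt0 : (0 < gcdn x y)%nat by rewrite gcdn_gt0 x_gt0.
rewrite smooth_partS_prime // mult_INR -Rpower_mult_distr; last 2 first.
- by apply: INR_gt0; apply: part_gt0.
- by apply: INR_gt0; rewrite expn_gt0 prime_gt0.
by rewrite INR_expn Rpower_pow_l //; apply: INR_gt0; apply: prime_gt0.
Qed.

Lemma gcd_smooth_sum_prime p M : prime p ->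
  gcd_smooth_sum s p.+1 M
  = \big[Rplus/0]_(k < M) (euler_weight s p k * gcd_smooth_sum s p (M %/ expn p k)).
Proof.
move=> pr_p; rewrite /gcd_smooth_sum.
have split_pair (a b : 'I_M) : gs p.+1 a.+1 b.+1 = \big[Rplus/0]_(k < M) (euler_weight s p k *
    (if expn p k %| a.+1 then (if expn p k %| b.+1 then gs p a.+1 b.+1 else 0) else 0)).
  rewrite Rpower_smooth_gcdS_prime // (Rpower_logn_gcd_sum pr_p (ltn_ord a) (ltn_ord b)).
  rewrite big_distrr; apply: eq_bigr => k _.
  by case: (expn p k %| a.+1); case: (expn p k %| b.+1) => /=; ring.
under eq_bigr => a _ do under eq_bigr => b _ do rewrite split_pair.
under eq_bigr => a _ do rewrite exchange_big.
rewrite exchange_big; apply: eq_bigr => k _.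
under eq_bigr => a _ do rewrite -big_distrr.
rewrite -big_distrr; congr (_ * _).
have pk_gt0 : (0 < expn p k)%nat by rewrite expn_gt0 prime_gt0.
transitivity (\big[Rplus/0]_(a < M) (if expn p k %| a.+1 then
    \big[Rplus/0]_(b < M) (if expn p k %| b.+1 then gs p a.+1 b.+1 else 0) else 0)).
  by apply: eq_bigr => a _; case: ifP => _ //; rewrite big1.
rewrite (@sum_dvd_reindex _ M (fun x => \big[Rplus/0]_(b < M)
    (if expn p k %| b.+1 then gs p x b.+1 else 0))) //.
apply: eq_bigr => a _; rewrite (@sum_dvd_reindex _ M (fun y => gs p (expn p k * a.+1)%nat y)) //.
by apply: eq_bigr => b _; rewrite -muln_gcdr smooth_part_pfactorM ?gcdn_gt0.
Qed.

Lemma gcd_smooth_sum_le m M : gcd_smooth_sum s m M <= INR M ^ 2 * Cpartial s m.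
Proof.
elim: m M => [|m IH] M.
  rewrite /gcd_smooth_sum /Cpartial big_ord0.
  under eq_bigr do under eq_bigr do rewrite smooth_part0 /= /Rpower ln_1 Rmult_0_r exp_0.
  by rewrite !big_const_ord !iter_Rplus /=; lra.
rewrite Cpartial_S; case: (boolP (prime m)) => [pr_m | npr_m]; last first.
  rewrite Rmult_1_r /gcd_smooth_sum.
  by under eq_bigr do under eq_bigr do rewrite smooth_partS_nonprime //; apply: IH.
have m_gt1 := prime_gt1 pr_m; have Cp1 := Cpartial_ge1 s01 m.
have M2Cp : 0 <= INR M ^ 2 * Cpartial s m by apply: Rmult_le_pos; [apply: pow2_ge_0 | lra].
rewrite gcd_smooth_sum_prime //.
apply: (@Rle_trans _ (\big[Rplus/0]_(k < M)
          (euler_weight s m k / (INR m ^ 2) ^ k * (INR M ^ 2 * Cpartial s m)))).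
  apply: Rsum_le => k _; have w0 := euler_weight_ge0 s01 m_gt1 k.
  have mk_gt0 : (0 < expn m k)%nat by rewrite expn_gt0 prime_gt0.
  apply: (Rle_trans _ _ _ (Rmult_le_compat_l _ _ _ w0 (IH _))).
  have := INR_divn_sqr_le M mk_gt0.
  rewrite INR_expn -pow_mult Nat.mul_comm pow_mult => le_div.
  rewrite /Rdiv Rmult_assoc; apply: Rmult_le_compat_l => //.
  by rewrite -Rmult_assoc (Rmult_comm (/ _)); apply: Rmult_le_compat_r; first lra.
rewrite -big_distrl.
apply: Rle_trans (Rmult_le_compat_r _ _ _ M2Cp (sum_euler_weight_le_Cfactor s01 m_gt1 M)) _.
by apply: Req_le; ring.
Qed.

Lemma sum_gcd_Rpower_le M :
  \big[Rplus/0]_(a < M) \big[Rplus/0]_(b < M) Rpower (INR (gcdn a.+1 b.+1)) s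
  <= INR M ^ 2 * Cpartial s M.+1.
Proof.
apply: Rle_trans (gcd_smooth_sum_le M.+1 M); apply: Req_le.
apply: eq_bigr => a _; apply: eq_bigr => b _; rewrite smooth_part_id ?gcdn_gt0 //.
by rewrite ltnS; apply: leq_trans (dvdn_leq _ (dvdn_gcdl _ _)) (ltn_ord a).
Qed.
End GcdSum.

Lemma maxgcd_witness N M (f : {ffun 'I_N -> 'I_M}) : (0 < maxgcd f)%nat ->
  exists j k : 'I_N, (j < k)%nat /\ maxgcd f = gcdn (Tval f j) (Tval f k).
Proof.
rewrite /maxgcd; case: N f => [|N] f; first by rewrite big_ord0.
rewrite (bigmax_eq_arg ord0) //; set j := [arg max_(_ > _) _].
case: (pickP (fun k : 'I_N.+1 => (j < k)%nat)) => [k0 lt_jk0|no_k]; last by rewrite big_pred0.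
rewrite (bigmax_eq_arg k0) //.
by exists j, [arg max_(k > k0 | (j < k)%nat) gcdn (Tval f j) (Tval f k)]; case: arg_maxnP.
Qed.

Lemma card_ffun_fix2 N M (j k : 'I_N) (a b : 'I_M) : j != k ->
  #|[pred f : {ffun 'I_N -> 'I_M} | (f j == a) && (f k == b)]| = expn M (N - 2).
Proof.
move=> neq_jk.
pose F := fun i : 'I_N => if i == j then pred1 a else if i == k then pred1 b else predT.
rewrite (@eq_card _ _ (finfun.family F)); last first.
  move=> f; rewrite inE; apply/andP/familyP => [[/eqP fj /eqP fk] i | Ff].
    by rewrite /F; case: eqP => [->|_]; [rewrite inE fj | case: eqP => [->|_]; rewrite ?inE ?fk].
  by split; [have := Ff j | have := Ff k]; rewrite /F ?eqxx // eq_sym (negbTE neq_jk).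
rewrite card_family foldrE big_map big_enum /= (bigD1 j) //= (bigD1 k) 1?eq_sym //=.
rewrite /F eqxx eq_sym (negbTE neq_jk) eqxx !card1 !mul1n.
rewrite (eq_bigr (fun _ => M)) => [|i /andP[/negbTE -> /negbTE ->]]; last exact: card_ord.
rewrite (@prod_nat_const _ [pred i | (i != j) && (i != k)]); congr expn.
have e := cardC1 j; rewrite (cardD1 k) [k \in _]inE eq_sym neq_jk card_ord add1n in e.
by rewrite !subnS subn0 -e; apply: eq_card => i; rewrite !inE andbC.
Qed.

Lemma sum_ffun_pair N M (j k : 'I_N) (G : 'I_M -> 'I_M -> R) : j != k ->
  \big[Rplus/0]_(f : {ffun 'I_N -> 'I_M}) G (f j) (f k)
  = INR (expn M (N - 2)) * \big[Rplus/0]_(a : 'I_M) \big[Rplus/0]_(b : 'I_M) G a b.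
Proof.
move=> neq_jk.
transitivity (\big[Rplus/0]_(f : {ffun 'I_N -> 'I_M}) \big[Rplus/0]_(a : 'I_M)
    \big[Rplus/0]_(b : 'I_M) (if (f j == a) && (f k == b) then G a b else 0)).
  apply: eq_bigr => f _; rewrite -(Rsum_pick (f j) (fun a => G a (f k))).
  apply: eq_bigr => a _; case: eqP => [<-|_] /=; first by rewrite Rsum_pick.
  by rewrite big1.
rewrite exchange_big; under eq_bigr do rewrite exchange_big.
rewrite big_distrr; apply: eq_bigr => a _; rewrite big_distrr; apply: eq_bigr => b _.
rewrite -(card_ffun_fix2 a b neq_jk).
exact: (Rsum_card [pred f : {ffun 'I_N -> 'I_M} | (f j == a) && (f k == b)]).
Qed.

Lemma count_pairs_le N : (2 * \sum_(j < N) \sum_(k < N) ((j < k)%nat : nat) <= N * N)%nat.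
Proof.
rewrite mul2n -addnn {2}exchange_big -big_split /=.
have -> : (N * N = \sum_(j < N) \sum_(k < N) 1)%nat by rewrite !sum_nat_const !card_ord muln1.
apply: leq_sum => j _; rewrite -big_split; apply: leq_sum => k _ /=.
by case: ltngtP.
Qed.

Section Sampling.
Variables (s : R) (N M : nat).
Hypothesis s01 : 0 < s < 1.

Local Notation sample := {ffun 'I_N -> 'I_M}.
Local Notation pair_term f j k :=
  (if (j < k)%nat then Rpower (INR (gcdn (Tval f j) (Tval f k))) s else 0).

Lemma pair_term_ge0 (f : sample) (j k : 'I_N) : 0 <= pair_term f j k.
Proof. by case: ifP => _; [apply/Rlt_le/Rpower_gt0 | apply: Rle_refl]. Qed.

Lemma card_maxgcd_ge_le thr : 0 < thr ->
  INR #|[set f : sample | Rgeb (INR (maxgcd f)) thr]| * Rpower thr s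
  <= \big[Rplus/0]_(f : sample) \big[Rplus/0]_(j : 'I_N) \big[Rplus/0]_(k : 'I_N) pair_term f j k.
Proof.
move=> thr_gt0; set S := [set f : sample | _].
rewrite -Rsum_card; apply: Rsum_le => f _.
case: ifP => [|_]; last by do 2!(apply: Rsum_ge0 => ? _); apply: pair_term_ge0.
rewrite inE /Rgeb; case: Rle_dec => // le_thr _.
have [|j [k [lt_jk max_jk]]] := @maxgcd_witness N M f.
  by apply/ltP/INR_lt; rewrite /=; lra.
apply: Rle_trans (Rsum_ge_term j _) => [|j']; last by apply: Rsum_ge0 => *; apply: pair_term_ge0.
apply: Rle_trans (Rsum_ge_term k _) => [|k']; last exact: pair_term_ge0.
by rewrite lt_jk -max_jk; apply: Rle_Rpower_l; lra.
Qed.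

Lemma sum_pair_terms_le :
  \big[Rplus/0]_(f : sample) \big[Rplus/0]_(j : 'I_N) \big[Rplus/0]_(k : 'I_N) pair_term f j k
  <= INR N ^ 2 / 2 * (INR (expn M (N - 2)) * (INR M ^ 2 * Cpartial s M.+1)).
Proof.
have gcd_sum0 : 0 <= INR (expn M (N - 2)) * (INR M ^ 2 * Cpartial s M.+1).
  have := Cpartial_ge1 s01 M.+1; have := pos_INR (expn M (N - 2)); have := pow2_ge_0 (INR M).
  by move=> *; apply: Rmult_le_pos => //; apply: Rmult_le_pos; lra.
rewrite exchange_big; apply: (@Rle_trans _ (\big[Rplus/0]_(j : 'I_N) \big[Rplus/0]_(k : 'I_N)
    (INR ((j < k)%nat : nat) * (INR (expn M (N - 2)) * (INR M ^ 2 * Cpartial s M.+1))))).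
  apply: Rsum_le => j _; rewrite exchange_big; apply: Rsum_le => k _.
  case lt_jk: (j < k)%nat; last by rewrite big1 //= Rmult_0_l; apply: Rle_refl.
  rewrite (sum_ffun_pair (fun a b => Rpower (INR (gcdn a.+1 b.+1)) s)).
    by rewrite /= Rmult_1_l; apply: Rmult_le_compat_l; [apply: pos_INR | apply: sum_gcd_Rpower_le].
  by rewrite neq_ltn lt_jk.
under eq_bigr do rewrite -big_distrl -INR_sum.
rewrite -big_distrl -INR_sum; apply: Rmult_le_compat_r => //.
have := le_INR _ _ (leP (count_pairs_le N)); rewrite !mult_INR /=; lra.
Qed.

Lemma prob_maxgcd_ge_le thr : (2 <= N)%nat -> (0 < M)%nat -> 0 < thr ->
  prob_maxgcd_ge N M thr <= INR N ^ 2 * Cpartial s M.+1 / (2 * Rpower thr s).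
Proof.
move=> N_ge2 M_gt0 thr_gt0.
have card_samples : INR (expn M (N - 2)) * INR M ^ 2 = INR (expn M N).
  by rewrite -INR_expn -mult_INR multE -expnD subnK.
have := Rle_trans _ _ _ (card_maxgcd_ge_le thr_gt0) sum_pair_terms_le.
rewrite -[INR (expn M (N - 2)) * _]Rmult_assoc card_samples => markov.
rewrite /prob_maxgcd_ge card_ffun !card_ord.
apply: Rdiv_le_cross; last lra.
- by apply: INR_gt0; rewrite expn_gt0 M_gt0.
- by have := Rpower_gt0 thr s; lra.
Qed.
End Sampling.

Lemma Mrange_gt0 alpha N : 0 <= alpha -> (0 < Mrange alpha N)%nat.
Proof.
move=> alpha_ge0; rewrite /Mrange; set r := exp (alpha * INR N).
have r_ge1 : 1 <= r.
  by apply: Rle_trans (exp_ineq1_le _); have := pos_INR N; nra.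
have [_ gt_r1] := base_Int_part r.
have : (0 < Int_part r)%Z by apply: lt_0_IZR; lra.
by move=> ?; apply/ltP; lia.
Qed.

Lemma Rpower_threshold x y s : 0 < x -> 0 < y -> 0 < s ->
  Rpower (Rpower x (2 / s) * Rpower y (1 / s)) s = x ^ 2 * y.
Proof.
move=> x0 y0 s0.
have e2 : 2 / s * s = INR 2 by rewrite /=; field; lra.
have e1 : 1 / s * s = 1 by field; lra.
rewrite -Rpower_mult_distr; [|exact: Rpower_gt0..].
by rewrite !Rpower_mult e2 e1 Rpower_pow ?Rpower_1.
Qed.

(* Under [R_scope], [(2 <= N)%N] below would not be read as a comparison of nats. *)
Local Close Scope R_scope.

Theorem theorem1p1 (alpha : R) (halpha : (0 < alpha)%R) :
  forall s : R, (0 < s < 1)%R ->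
  exists Cs : R,
    Un_cv (Cpartial s) Cs /\
    (forall (b : R) (N : nat), (0 < b)%R -> (2 <= N)%N ->
       (prob_maxgcd_ge N (Mrange alpha N)
          (Rpower (INR N) (2 / s) * Rpower b (1 / s))
        <= Cs / (2 * b))%R).
Proof.
move=> s s01; have [Cs Cpartial_to_Cs] := Cpartial_cv s01.
exists Cs; split => // b N b_gt0 N_ge2.
have N_gt0 : (0 < INR N)%R by apply: INR_gt0; apply: leq_trans N_ge2.
have Nb_gt0 : (0 < INR N ^ 2 * b)%R by apply: Rmult_lt_0_compat => //; apply: pow_lt.
have thr_gt0 : (0 < Rpower (INR N) (2 / s) * Rpower b (1 / s))%R.
  by apply: Rmult_lt_0_compat; apply: Rpower_gt0.
have := prob_maxgcd_ge_le s01 N_ge2 (Mrange_gt0 N (Rlt_le _ _ halpha)) thr_gt0.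
rewrite Rpower_threshold //; last by case: s01.
move=> prob_le; apply: Rle_trans prob_le _.
have Cp_le := growing_ineq _ _ (Cpartial_growing s01) Cpartial_to_Cs (Mrange alpha N).+1.
apply: Rdiv_le_cross; [lra | lra |].
have := Rmult_le_compat_r _ _ _ (Rlt_le _ _ Nb_gt0) Cp_le; lra.
Qed.
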